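(* For every NBA $\mathcal A$, the relation $S(\subseteq^{\mathrm{bw\text{-}di}},\supseteq^{\mathrm{bw\text{-}di}})$ is good for saturation, i.e. $\mathcal L(\mathrm{Sat}(\mathcal A,S(\subseteq^{\mathrm{bw\text{-}di}},\supseteq^{\mathrm{bw\text{-}di}})))=\mathcal L(\mathcal A)$.
   Context: An NBA $\mathcal A=(\Sigma,Q,I,F,\delta)$, $\delta\subseteq Q\times\Sigma\times Q$, forward and backward complete; initial traces start in $I$, fair traces are infinite and visit $F$ infinitely often; the language is the set of infinite words with an initial fair trace. Backward direct trace inclusion: $p\subseteq^{\mathrm{bw\text{-}di}}q$ iff for every finite word $\sigma_0\cdots\sigma_{m-1}$ and every initial finite trace $p_0\xrightarrow{\sigma_0}\cdots\xrightarrow{\sigma_{m-1}}p_m=p$ there is an initial finite trace $q_0\xrightarrow{\sigma_0}\cdots\xrightarrow{\sigma_{m-1}}q_m=q$ with $p_i\in F\Rightarrow q_i\in F$ for $0\le i\le m$; $\supseteq^{\mathrm{bw\text{-}di}}$ is its inverse. Let $\Delta=Q\times\Sigma\times Q$; $S(R_b,R_f)=\{((p,\sigma,r),(p',\sigma,r'))\in\Delta\times\Delta:p\,R_b\,p',\ r\,R_f\,r'\}$. For reflexive $S\subseteq\Delta\times\Delta$, $\mathrm{Sat}(\mathcal A,S)=(\Sigma,Q,I,F,\{t'\in\Delta:\exists t\in\delta,(t',t)\in S\})$. Good for saturation means the language is unchanged. *)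

From mathcomp Require Import all_boot.
Set Implicit Arguments. Unset Strict Implicit. Unset Printing Implicit Defensive.

Record nba (Sigma Q : finType) := NBA {
  init  : Q -> Prop;
  final : Q -> Prop;
  trans : Q -> Sigma -> Q -> Prop }.

Section Defs.
Variables (Sigma Q : finType).
Implicit Types (A : nba Sigma Q).

Definition fw_complete A : Prop :=
  forall (q : Q) (a : Sigma), exists q', trans A q a q'.
Definition bw_complete A : Prop :=
  forall (q : Q) (a : Sigma), exists q', trans A q' a q.

Definition is_trace A (w : nat -> Sigma) (t : nat -> Q) : Prop :=
  forall i, trans A (t i) (w i) (t i.+1).

Definition fair A (t : nat -> Q) : Prop :=
  forall n, exists m, n <= m /\ final A (t m).

Definition accepts A (w : nat -> Sigma) : Prop :=
  exists t, init A (t 0) /\ is_trace A w t /\ fair A t.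

(* A finite word
   sigma_0..sigma_{m-1} and a finite trace p_0..p_m are represented by
   functions on nat of which only the first m (resp. m+1) values matter. *)
Definition bw_di_incl A (p q : Q) : Prop :=
  forall (m : nat) (w : nat -> Sigma) (ps : nat -> Q),
    init A (ps 0) ->
    (forall i, i < m -> trans A (ps i) (w i) (ps i.+1)) ->
    ps m = p ->
    exists qs : nat -> Q,
      [/\ init A (qs 0),
          (forall i, i < m -> trans A (qs i) (w i) (qs i.+1)),
          qs m = q &
          (forall i, i <= m -> final A (ps i) -> final A (qs i))].

Definition bw_di_sup A (p q : Q) : Prop := bw_di_incl A q p.

Definition S_rel (Rb Rf : Q -> Q -> Prop)
  (t1 t2 : Q * Sigma * Q) : Prop :=
  let: (p, a, r) := t1 in let: (p', a', r') := t2 in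
  [/\ a = a', Rb p p' & Rf r r'].

Definition Sat A (S : Q * Sigma * Q -> Q * Sigma * Q -> Prop) : nba Sigma Q :=
  NBA (init A) (final A)
      (fun p a r => exists t, trans A t.1.1 t.1.2 t.2 /\ S (p, a, r) t).

End Defs.

From mathcomp Require Import all_boot.
From Stdlib Require Import Classical ClassicalEpsilon.

Set Implicit Arguments.
Unset Strict Implicit.
Unset Printing Implicit Defensive.

(* Every transition of A is kept in the saturation since both relations are
   reflexive, so only the inclusion of the saturated language needs work.
   Given a fair initial run t of the saturated automaton, induction on n and
   the two trace inclusions of each saturated transition yield, for every n,
   an initial run of A over w_0..w_{n-1} that ends in t_n and is accepting
   wherever t is.  Koenig's lemma over the finite state set glues these finite
   runs into one infinite run of A, which is then fair because t is. *)

Section Koenig.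
Variables (Q : finType) (P : nat -> (nat -> Q) -> Prop).
Hypothesis P_total : forall n, exists f, P n f.
Hypothesis P_downward : forall m n f, m <= n -> P n f -> P m f.

Lemma finite_pigeonhole (R : nat -> Q -> Prop) :
  (forall m n q, m <= n -> R n q -> R m q) ->
  (forall n, exists q, R n q) -> exists q, forall n, R n q.
Proof.
move=> R_downward R_total; apply: NNPP => noq.
have bound q : exists n, ~ R n q.
  by apply: NNPP => H; apply: noq; exists q => n; apply: NNPP => Hn; apply: H; exists n.
have inh_nat : inhabited nat by exact: inhabits 0.
pose b q := epsilon inh_nat (fun n => ~ R n q).
have [q Rq] := R_total (\max_q b q).
apply: (epsilon_spec inh_nat _ (bound q)); apply: R_downward Rq.
exact: leq_bigmax.
Qed.

Definition extendable n (f : nat -> Q) :=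
  forall m, exists g, P m g /\ forall i, i < n -> g i = f i.

Lemma extendable_eq n f f' :
  (forall i, i < n -> f i = f' i) -> extendable n f -> extendable n f'.
Proof.
move=> eq_ff' ext_f m; have [g [Pg eq_gf]] := ext_f m.
by exists g; split=> // i lt_in; rewrite eq_gf // eq_ff'.
Qed.

Lemma extendable_step n f :
  extendable n f -> exists q, extendable n.+1 [eta f with n |-> q].
Proof.
move=> ext_f.
have [||q Rq] := @finite_pigeonhole
  (fun m q => exists g, [/\ P m g, forall i, i < n -> g i = f i & g n = q]).
- move=> m m' q le_mm' [g [Pg eq_gf gn]].
  by exists g; split=> //; apply: P_downward Pg.
- move=> m; have [g [Pg eq_gf]] := ext_f m.
  by exists (g n), g.
exists q => m; have [g [Pg eq_gf gn]] := Rq m.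
exists g; split=> // i; rewrite ltnS leq_eqVlt /=.
by case: eqP => [->|_] //= /eq_gf.
Qed.

Lemma koenig : exists p, forall n, exists f, P n f /\ forall i, i <= n -> f i = p i.
Proof.
have [f0 _] := P_total 0.
have inhQ : inhabited Q by exact: inhabits (f0 0).
pose next n f := epsilon inhQ (fun q => extendable n.+1 [eta f with n |-> q]).
pose F := fix F n := if n is k.+1 then [eta F k with k |-> next k (F k)] else f0.
pose p i := F i.+1 i.
have F_ext n : extendable n (F n).
  elim: n => [m|n IH]; first by have [g Pg] := P_total m; exists g.
  exact: epsilon_spec inhQ _ (extendable_step IH).
have F_p n i : i < n -> F n i = p i.
  elim: n => [//|n IH]; rewrite ltnS leq_eqVlt /= => /orP[/eqP->|lt_in].
    by rewrite /p /= eqxx.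
  by rewrite (ltn_eqF lt_in) IH.
exists p => n; have [g [Pg eq_gp]] := extendable_eq (F_p n.+1) (F_ext n.+1) n.
by exists g; split=> // i le_in; apply: eq_gp.
Qed.

End Koenig.

Section Saturation.
Variables (Sigma Q : finType) (A : nba Sigma Q).

Definition init_run (w : nat -> Sigma) n (qs : nat -> Q) :=
  init A (qs 0) /\ forall i, i < n -> trans A (qs i) (w i) (qs i.+1).

Definition dominates n (ps qs : nat -> Q) :=
  forall i, i <= n -> final A (ps i) -> final A (qs i).

Lemma bw_di_incl_refl p : bw_di_incl A p p.
Proof. by move=> m w ps ps0 ps_tr psm; exists ps. Qed.

Lemma trans_Sat_refl (Rb Rf : Q -> Q -> Prop) p a r :
  (forall q, Rb q q) -> (forall q, Rf q q) ->
  trans A p a r -> trans (Sat A (S_rel Rb Rf)) p a r.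
Proof. by move=> Rb_refl Rf_refl tr; exists (p, a, r). Qed.

Lemma accepts_Sat_refl (Rb Rf : Q -> Q -> Prop) w :
  (forall q, Rb q q) -> (forall q, Rf q q) ->
  accepts A w -> accepts (Sat A (S_rel Rb Rf)) w.
Proof.
move=> Rb_refl Rf_refl [t [t0 [t_tr t_fair]]].
by exists t; do 2!split=> //; move=> i; apply: trans_Sat_refl.
Qed.

Let SatA := Sat A (S_rel (bw_di_incl A) (bw_di_sup A)).

Lemma init_run_eta w n qs r :
  init_run w n qs -> trans A (qs n) (w n) r ->
  init_run w n.+1 [eta qs with n.+1 |-> r].
Proof.
move=> [qs0 qs_tr] tr_r; split=> // i; rewrite ltnS leq_eqVlt /=.
case/orP=> [/eqP->|lt_in]; first by rewrite eqxx ltn_eqF.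
by rewrite !ltn_eqF ?ltnS ?(ltnW lt_in) //; apply: qs_tr.
Qed.

(* A saturated step t_n -> t_{n+1} comes from a transition p' -> r' of A with
   t_n below p' and r' below t_{n+1}: move the run onto p', take the step to
   r', then move the run onto t_{n+1}. *)
Lemma Sat_step_lift w (t qs : nat -> Q) n :
  init_run w n qs -> qs n = t n -> dominates n t qs ->
  trans SatA (t n) (w n) (t n.+1) ->
  exists qs', [/\ init_run w n.+1 qs', qs' n.+1 = t n.+1 & dominates n.+1 t qs'].
Proof.
move=> [qs0 qs_tr] qsn dom_qs [[[p' a] r'] /= [tr [eq_a incl_p' incl_r']]].
subst a.
have [qs2 [qs20 qs2_tr qs2n dom_qs2]] := incl_p' n w qs qs0 qs_tr qsn.
have [run3_0 run3_tr] : init_run w n.+1 [eta qs2 with n.+1 |-> r'].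
  by apply: init_run_eta; rewrite ?qs2n.
have [|qs3 [qs30 qs3_tr qs3n dom_qs3]] := incl_r' n.+1 w _ run3_0 run3_tr.
  by rewrite /= eqxx.
exists qs3; split=> // i; rewrite leq_eqVlt ltnS => /orP[/eqP->|le_in fin_t].
  by rewrite qs3n.
apply: dom_qs3 (leqW le_in) _; rewrite /= ltn_eqF ?ltnS //.
exact: dom_qs2 le_in (dom_qs i le_in fin_t).
Qed.

Lemma Sat_run_lift w t :
  init SatA (t 0) -> is_trace SatA w t ->
  forall n, exists qs, [/\ init_run w n qs, qs n = t n & dominates n t qs].
Proof.
move=> t0 t_tr; elim=> [|n [qs [run_qs qsn dom_qs]]].
  by exists t; split=> //; split=> // i; rewrite ltn0.
exact: Sat_step_lift run_qs qsn dom_qs (t_tr n).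
Qed.

Lemma init_run_le w m n qs : m <= n -> init_run w n qs -> init_run w m qs.
Proof.
by move=> le_mn [qs0 qs_tr]; split=> // i lt_im; apply: qs_tr (leq_trans lt_im le_mn).
Qed.

Lemma dominates_le m n ps qs : m <= n -> dominates n ps qs -> dominates m ps qs.
Proof. by move=> le_mn dom i le_im; apply: dom (leq_trans le_im le_mn). Qed.

Lemma accepts_of_dominating_prefixes w (t p : nat -> Q) :
  fair A t ->
  (forall n, exists qs, (init_run w n qs /\ dominates n t qs) /\
                        forall i, i <= n -> qs i = p i) ->
  accepts A w.
Proof.
move=> t_fair prefix; exists p; split; [|split].
- by have [qs [[[qs0 _] _] eq_qp]] := prefix 0; rewrite -eq_qp.
- move=> i; have [qs [[[_ qs_tr] _] eq_qp]] := prefix i.+1.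
  by rewrite -!eq_qp ?leqnSn //; apply: qs_tr.
- move=> n; have [m [le_nm fin_m]] := t_fair n; exists m; split=> //.
  by have [qs [[_ dom_qs] eq_qp]] := prefix m; rewrite -eq_qp //; apply: dom_qs.
Qed.

End Saturation.

Theorem theorem10p6 (Sigma Q : finType) (A : nba Sigma Q) :
  fw_complete A -> bw_complete A ->
  forall w : nat -> Sigma,
    accepts (Sat A (S_rel (bw_di_incl A) (bw_di_sup A))) w <-> accepts A w.
Proof.
move=> _ _ w; split; last by apply: accepts_Sat_refl; apply: bw_di_incl_refl.
move=> [t [t0 [t_tr t_fair]]].
have lift := Sat_run_lift t0 t_tr.
have [||p prefix] := koenig (P := fun n qs => init_run A w n qs /\ dominates A n t qs).
- by move=> n; have [qs [run_qs _ dom_qs]] := lift n; exists qs.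
- move=> m n qs le_mn [run_qs dom_qs].
  by split; [apply: init_run_le run_qs | apply: dominates_le dom_qs].
exact: (@accepts_of_dominating_prefixes _ _ A w t p t_fair).
Qed.
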